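(* Let $n\ge1$ be an integer, $0<h<1$, and let $K$ be a kernel supported on $[-1,1]$, symmetric about $0$, bounded, with $\int_{-1}^1K(x)dx=1$, such that $1-\int_{-2/n}^{2/n}\frac1hK(\frac uh)du\ne0$. For $t\in\mathbb{Z}$ define $$K_n^h(t)=\frac{\int_{|t|/n}^{(|t|+1)/n}\frac1hK(\frac uh)\,du}{1-\int_{-2/n}^{2/n}\frac1hK(\frac uh)\,du}\,\mathbb{1}_{\{|t|\ge2\}}.$$ Then for every integer $i$ with $\lceil nh\rceil\le i\le n-\lceil nh\rceil$ we have $\sum_{j=0}^{n-1}K_n^h(i-j)=1$. *)

From HB Require Import structures.
From mathcomp Require Import all_boot all_order all_algebra.
From mathcomp Require Import all_classical all_reals all_analysis.
Set Implicit Arguments. Unset Strict Implicit. Unset Printing Implicit Defensive.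
Import Order.TTheory GRing.Theory Num.Theory.
Import numFieldNormedType.Exports.
Local Open Scope classical_set_scope.
Local Open Scope ring_scope.

Definition Kscaled (R : realType) (K : R -> R) (h : R) : R -> R :=
  fun u => h^-1 * K (u / h).

Definition Iab (R : realType) (f : R -> R) (a b : R) : R :=
  \int[@lebesgue_measure R]_(u in `[a, b]) f u.

Definition Knh (R : realType) (K : R -> R) (n : nat) (h : R) (t : int) : R :=
  if (2 <= `|t|)%N then
    Iab (Kscaled K h) ((`|t|%N)%:R / n%:R) ((`|t|%N).+1%:R / n%:R)
    / (1 - Iab (Kscaled K h) (- (2 / n%:R)) (2 / n%:R))
  else 0.

(* Write K_h u = h^-1 K (u / h) and F x = \int_0^x K_h.  K_h is even, vanishes
   outside [-h, h] and has total mass 1, so F = 1/2 on [h, +oo) and the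
   denominator of K_n^h is 1 - 2 F (2/n).  The numerator of K_n^h(t) is
   F ((|t|+1)/n) - F (|t|/n), so the sum over j telescopes separately over the
   positive and the negative values of t = i - j, leaving
   F ((i+1)/n) + F ((n-i)/n) - 2 F (2/n).  The bounds on i put both arguments
   beyond h, so the sum equals the denominator divided by itself. *)

From HB Require Import structures.
From mathcomp Require Import all_boot all_order all_algebra.
From mathcomp Require Import all_classical all_reals all_analysis.
From mathcomp Require Import ring lra zify measurable_realfun.
Import Order.TTheory GRing.Theory Num.Theory.
Import numFieldNormedType.Exports.
Local Open Scope classical_set_scope.
Local Open Scope ring_scope.

Section interval_integral.
Context {R : realType} {f : R -> R}.
Hypotheses (mf : measurable_fun setT f) (bf : exists M, forall x, `|f x| <= M).
Local Notation mu := (@lebesgue_measure R).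

Lemma integrable_itvcc (a b : R) : mu.-integrable `[a, b] (EFin \o f).
Proof.
apply: measurable_bounded_integrable => //.
- exact: compact_finite_measure (@segment_compact _ a b).
- exact: measurable_funTS.
- case: bf => M fM; exists M; split; first exact: num_real.
  by move=> x Mx y _ /=; apply: le_trans (fM y) (ltW Mx).
Qed.

Lemma Iab_split (a b c : R) : a <= b -> b <= c ->
  Iab f a c = Iab f a b + Iab f b c.
Proof.
move=> ab bc; rewrite /Iab -[X in _ + X]Rintegral_itv_obnd_cbnd; last first.
  by apply: integrableS (integrable_itvcc a c) => //; apply: subset_itvr; rewrite bnd_simp.
by rewrite -(Rintegral_itvB (integrable_itvcc a c) ab bc) addrC subrK.
Qed.

Lemma Iab_eq0 (a b : R) : {in `]a, b], f =1 cst 0} -> Iab f a b = 0.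
Proof.
move=> f0; rewrite /Iab -Rintegral_itv_obnd_cbnd; last first.
  by apply: integrableS (integrable_itvcc a b) => //; apply: subset_itvr; rewrite bnd_simp.
rewrite (@eq_Rintegral _ _ _ mu _ (cst 0)).
  by rewrite Rintegral_cst// mul0r.
by move=> x /set_mem; exact: f0.
Qed.

Hypothesis f_even : forall x, f (- x) = f x.

Lemma Iab_even_reflect (a b : R) : Iab f (- b) (- a) = Iab f a b.
Proof.
rewrite /Iab /Rintegral; congr fine.
rewrite (@eq_measure_integral _ _ _ _
  (pushforward mu (-%R : R -> measurableTypeR R))); last first.
  by move=> A mA _; exact/esym/lebesgue_measureN.
rewrite integral_pushforward //=; last 2 first.
- exact/measurable_EFinP.
- rewrite opp_preimage_itvbndbnd /= !opprK.
  by apply: eq_integrable (integrable_itvcc a b) => // x _ /=; rewrite f_even.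
rewrite opp_preimage_itvbndbnd /= !opprK.
by apply: eq_integral => x _ /=; rewrite f_even.
Qed.

Lemma Iab_even_centered (c : R) : 0 <= c -> Iab f (- c) c = 2 * Iab f 0 c.
Proof.
move=> c0; rewrite (@Iab_split _ 0) ?oppr_le0// -[in Iab f _ 0]oppr0 Iab_even_reflect.
by rewrite mulr2n mulrDl mul1r.
Qed.

End interval_integral.

Lemma integral_mscale d (T : measurableType d) (R : realType)
    (mu : {measure set T -> \bar R}) (k : {nonneg R}) (D : set T) (f : T -> \bar R) :
  measurable D -> mu.-integrable D f ->
  (\int[mscale k mu]_(x in D) f x = k%:num%:E * \int[mu]_(x in D) f x)%E.
Proof.
move=> mD intf; have mfD : measurable_fun D f by case/integrableP: intf.
rewrite (integralE (mscale k mu)) (integralE mu) !ge0_integral_mscale//; last 2 first.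
- exact: measurable_funeneg.
- exact: measurable_funepos.
rewrite [RHS]muleBr//; apply: fin_num_adde_defl; rewrite fin_numN.
exact: integrable_neg_fin_num.
Qed.

Section dilation.
Context {R : realType} (c : R).
Hypothesis c0 : 0 < c.
Local Notation mu := (@lebesgue_measure R).

Lemma measurable_divr : measurable_fun setT (fun x : R => x / c).
Proof. by apply: measurable_funM => //; exact: measurable_cst. Qed.

Lemma divr_preimage_itvbndbnd (ba bb : bool) (a b : R) :
  (fun x => x / c) @^-1` [set` Interval (BSide ba a) (BSide bb b)] =
  [set` Interval (BSide ba (a * c)) (BSide bb (b * c))].
Proof.
by apply/seteqP; split => x /=;
  rewrite !itv_boundlr !lteBSide /= lteif_pdivlMr// lteif_pdivrMr.
Qed.

Lemma lebesgue_measure_divr (A : set R) : measurable A ->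
  pushforward mu (fun x => x / c : measurableTypeR R) A = (c%:E * mu A)%E.
Proof.
move=> mA; have cV0 : 0 <= c^-1 by rewrite invr_ge0 ltW.
have := @lebesgue_measure_unique R
  (mscale (NngNum cV0) (pushforward mu (fun x => x / c : measurableTypeR R))).
move=> /(_ measurable_divr) muE; rewrite muE//=; last first.
  move=> _ [[a b]] _ <-; rewrite /mscale /= /pushforward divr_preimage_itvbndbnd.
  rewrite !lebesgue_measure_itv /= !lte_fin ltr_pM2r//.
  case: ifP => _; last by rewrite mule0.
  by rewrite -EFinM; congr (_%:E); field; rewrite gt_eqF.
by rewrite muleA -EFinM divff ?gt_eqF// mul1e.
Qed.

Lemma Iab_divr (g : R -> R) (a b : R) :
  measurable_fun setT g -> (exists M, forall x, `|g x| <= M) ->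
  Iab (fun u => g (u / c)) (a * c) (b * c) = c * Iab g a b.
Proof.
move=> mg [M gM].
have mgc : measurable_fun setT (fun u : R => g (u / c)).
  exact: measurableT_comp mg measurable_divr.
have intgc : mu.-integrable ((fun x => x / c) @^-1` `[a, b])
    ((EFin \o g) \o (fun x => x / c)).
  by rewrite divr_preimage_itvbndbnd; apply: (integrable_itvcc mgc); exists M.
(* The casts select the measurable structure on [R] that [mu] is defined on. *)
have mdiv : measurable_fun [set: measurableTypeR R]
    (fun x => x / c : measurableTypeR R) by exact: measurable_divr.
have mEg : measurable_fun [set: measurableTypeR R]
    (EFin \o g : measurableTypeR R -> \bar R) by exact/measurable_EFinP.
rewrite /Iab /Rintegral -divr_preimage_itvbndbnd.
rewrite -(integral_pushforward mdiv mEg intgc) //.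
rewrite [X in fine X = _](@eq_measure_integral _ _ _ _
  (mscale (NngNum (ltW c0)) mu)); last first.
  by move=> A mA _; exact: lebesgue_measure_divr.
rewrite integral_mscale //; last by apply: (integrable_itvcc mg); exists M.
rewrite fineM //; apply: integrable_fin_num => //.
by apply: (integrable_itvcc mg); exists M.
Qed.

End dilation.

Section tail_increments.
Context {V : zmodType} (P : nat -> V).

Definition tail_increment (t : int) : V :=
  if (2 <= `|t|)%N then P `|t|.+1 - P `|t| else 0.

(* Clamping the argument at 2 makes both one-sided halves of [tail_increment]
   telescope. *)
Let Q (x : int) : V := P `|Num.max x 2|%N.

Let Q_le2 x : x <= 2 -> Q x = P 2.
Proof. by move=> x2; rewrite /Q; congr P; lia. Qed.

Let Q_ge2 x : 2 <= x -> Q x = P `|x|%N.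
Proof. by move=> x2; rewrite /Q; congr P; lia. Qed.

Let tail_incrementE t :
  tail_increment t = (Q (t + 1) - Q t) + (Q (1 - t) - Q (- t)).
Proof.
rewrite /tail_increment; have [t_ge2|t_lt2] := lerP 2 t.
  rewrite ifT; last lia.
  rewrite (Q_ge2 (t + 1)) 1?(Q_ge2 t) 1?(Q_le2 (1 - t)) 1?(Q_le2 (- t)); try lia.
  by rewrite (_ : absz (t + 1) = (absz t).+1) ?subrr ?addr0 //; lia.
have [t_leN2|t_gtN2] := lerP t (-2).
  rewrite ifT; last lia.
  rewrite (Q_le2 (t + 1)) 1?(Q_le2 t) 1?(Q_ge2 (1 - t)) 1?(Q_ge2 (- t)); try lia.
  rewrite (_ : absz (1 - t) = (absz t).+1) 1?(_ : absz (- t) = absz t); try lia.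
  by rewrite subrr add0r.
rewrite ifF; last lia.
by rewrite !Q_le2 ?subrr ?addr0 //; lia.
Qed.

Lemma sum_tail_increment (n i : nat) : (i < n)%N ->
  \sum_(j < n) tail_increment (i%:Z - j%:Z)
  = P (maxn i.+1 2) + P (maxn (n - i) 2) - P 2 *+ 2.
Proof.
move=> lt_in; rewrite -(big_mkord xpredT (fun j => tail_increment (i%:Z - j%:Z))).
under eq_bigr do rewrite tail_incrementE.
rewrite big_split /=.
pose G j := Q (i%:Z - j%:Z + 1); pose H j := Q (j%:Z - i%:Z).
have -> : \sum_(0 <= j < n) (Q (i%:Z - j%:Z + 1) - Q (i%:Z - j%:Z)) = G 0%N - G n.
  rewrite -opprB -telescope_sumr // -sumrN; apply: eq_bigr => j _.
  by rewrite /G opprB; congr (_ - Q _); lia.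
have -> : \sum_(0 <= j < n) (Q (1 - (i%:Z - j%:Z)) - Q (- (i%:Z - j%:Z))) = H n - H 0%N.
  rewrite -telescope_sumr //; apply: eq_bigr => j _.
  by rewrite /H; congr (Q _ - Q _); lia.
rewrite /G /H (Q_le2 (i%:Z - n%:Z + 1)) ?(Q_le2 (0%:Z - i%:Z)); try lia.
rewrite /Q (_ : absz (Num.max (i%:Z - 0%:Z + 1) 2) = maxn i.+1 2); last lia.
rewrite (_ : absz (Num.max (n%:Z - i%:Z) 2) = maxn (n - i) 2); last lia.
by rewrite mulr2n opprD addrACA.
Qed.

End tail_increments.

Section rescaled_kernel.
Context {R : realType} (K : R -> R) (h : R).
Hypotheses (mK : measurable_fun setT K) (bK : exists M, forall x, `|K x| <= M).
Local Notation Kh := (Kscaled K h).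

Lemma measurable_Kscaled : measurable_fun setT Kh.
Proof.
apply: measurable_funM; first exact: measurable_cst.
exact: measurableT_comp mK (measurable_divr h).
Qed.

Lemma Kscaled_bounded : exists M, forall x, `|Kh x| <= M.
Proof.
case: bK => M KM; exists (`|h^-1| * M) => x.
by rewrite /Kscaled normrM ler_wpM2l.
Qed.

Lemma Knh_tail_increment (n : nat) (t : int) : (0 < n)%N ->
  Knh K n h t = tail_increment (fun k => Iab Kh 0 (k%:R / n%:R)) t
                / (1 - Iab Kh (- (2 / n%:R)) (2 / n%:R)).
Proof.
move=> n0; rewrite /Knh /tail_increment; case: ifP => _; last by rewrite mul0r.
rewrite (Iab_split measurable_Kscaled Kscaled_bounded 0 ((absz t)%:R / n%:R)).
- by rewrite addrAC subrr add0r.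
- by rewrite divr_ge0.
- by rewrite ler_pM2r ?invr_gt0 ?ltr0n // ler_nat.
Qed.

Hypotheses (h0 : 0 < h) (K_even : forall x, K (- x) = K x)
  (K_supp : forall x, 1 < `|x| -> K x = 0) (K_int : Iab K (-1) 1 = 1).

Lemma Kscaled_even x : Kh (- x) = Kh x.
Proof. by rewrite /Kscaled mulNr K_even. Qed.

Lemma Iab_Kscaled_total : Iab Kh (- h) h = 1.
Proof.
have bKh : exists M, forall x, `|K (x / h)| <= M.
  by case: bK => M KM; exists M.
rewrite /Iab /Kscaled RintegralZl //; last first.
  apply: (integrable_itvcc _ bKh); exact: measurableT_comp mK (measurable_divr h).
have := Iab_divr h h0 K (-1) 1 mK bK; rewrite mulN1r mul1r K_int mulr1 /Iab => ->.
by rewrite mulVf ?gt_eqF.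
Qed.

Lemma Iab_Kscaled_half x : h <= x -> Iab Kh 0 x = 2^-1.
Proof.
move=> hx; have mKh := measurable_Kscaled; have bKh := Kscaled_bounded.
have Kh_eq0 : {in `]h, x], Kh =1 cst 0}.
  move=> u; rewrite in_itv /= => /andP[hu _]; have u0 : 0 < u := lt_trans h0 hu.
  by rewrite /Kscaled K_supp ?mulr0 // gtr0_norm ?divr_gt0 // ltr_pdivlMr // mul1r.
rewrite (Iab_split mKh bKh 0 h x (ltW h0) hx) (Iab_eq0 mKh bKh h x Kh_eq0) addr0.
have two_neq0 : (2 : R) != 0 by rewrite pnatr_eq0.
apply: (mulfI two_neq0); rewrite mulfV //.
by rewrite -(Iab_even_centered mKh bKh Kscaled_even h (ltW h0)) Iab_Kscaled_total.
Qed.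

End rescaled_kernel.

Theorem lemma7p1 (R : realType) (n : nat) (h : R) (K : R -> R)
  (hn : (1 <= n)%N) (h0 : 0 < h) (h1 : h < 1)
  (Kmeas : measurable_fun setT K)
  (Ksupp : forall x : R, 1 < `|x| -> K x = 0)
  (Ksym : forall x : R, K (- x) = K x)
  (Kbdd : exists M : R, forall x : R, `|K x| <= M)
  (Kint : Iab K (-1) 1 = 1)
  (Kden : 1 - Iab (Kscaled K h) (- (2 / n%:R)) (2 / n%:R) != 0)
  (i : int)
  (hi1 : Num.ceil (n%:R * h) <= i)
  (hi2 : i <= n%:Z - Num.ceil (n%:R * h)) :
  \sum_(j < n) Knh K n h (i - (j : nat)%:Z) = 1.
Proof.
set c := Num.ceil _ in hi1 hi2.
have c_gt0 : 0 < c by rewrite ceil_gt0 mulr_gt0 ?ltr0n.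
have half (m : nat) : c <= m%:Z -> Iab (Kscaled K h) 0 (m%:R / n%:R) = 2^-1.
  move=> cm; apply: Iab_Kscaled_half => //.
  (* [ceil_le_int] produces [m%:Z%:~R], which is convertible to [m%:R]. *)
  by move: cm; rewrite ler_pdivlMr ?ltr0n // mulrC ceil_le_int.
(* [lia] must not see the real-valued body of [c]. *)
clearbody c; case: i hi1 hi2 => [k hi1 hi2 | k hi1 _]; last lia.
under eq_bigr do rewrite Knh_tail_increment //.
rewrite -mulr_suml sum_tail_increment; last lia.
rewrite (half (maxn k.+1 2)) ?(half (maxn (n - k) 2)); try lia.
have two_n_ge0 : 0 <= 2 / n%:R :> R by rewrite divr_ge0.
suff -> : 2^-1 + 2^-1 - Iab (Kscaled K h) 0 (2 / n%:R) *+ 2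
          = 1 - Iab (Kscaled K h) (- (2 / n%:R)) (2 / n%:R) by exact: mulfV.
rewrite [in RHS](Iab_even_centered (measurable_Kscaled K h Kmeas)
  (Kscaled_bounded K h Kbdd) (Kscaled_even K h Ksym) _ two_n_ge0).
lra.
Qed.
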